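(* (Stable Local Attractor.) Let $z^*\in\bigcap_{t=1}^M F(\mathcal{T}_t)$ and let $r=\min\{r_t: t\in\{1,\dots,M\}\}$, where $r_t=\min\{d_{sep}(z^*,C_t),\ d_{esc}(z^*,C_t)\}$ (alternatively, $r_t$ may be taken as: $\min\{d_{sep}(z^*,C_t),\ \tfrac{d_{sep}(z^*,C_t)+d_{esc}(z^*,C_t)}{2}\}$ if $|K_t(z^* )|=1$, and $\min\{g(x_i^*,x_j^*,w_i,w_j),\,g(y_i^*,y_j^*,h_i,h_j)\}$ if $|K_t(z^* )|=2$, where $C_t=C_{i,j}$, $z^*=(x^*,y^* )$ and $g(a,b,c,d)=|(a-b)+(c-d)/2|/\sqrt{2}$), and assume $r>0$. Let $\epsilon\in(0,r)$ be arbitrary and let $(z^n)_{n\ge0}$ be a sequential MAP trajectory. If $z^{n_0}\in B(z^*,\epsilon)$ for some $n_0$, then $z^n\in B(z^*,\epsilon)$ for all $n\ge n_0$, and $(z^n)$ converges to some common fixed point $\tilde z^*\in\bigcap_{t=1}^M F(\mathcal{T}_t)$.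
   Context: Fix reals $W,H>0$, integers $N\ge N_m\ge 2$, and widths $w_i>0$, heights $h_i>0$ for $1\le i\le N_m$. Points of $\mathbb{R}^{2N}$ are written $z=(x,y)$ with $x=(x_1,\dots,x_N)$, $y=(y_1,\dots,y_N)$. For $1\le i\le N_m$ let $B_i^x=\{z: 0\le x_i\le W-w_i\}$, $B_i^y=\{z: 0\le y_i\le H-h_i\}$; for $i\neq j$ let $B_{i,j}=B_i^x\cap B_i^y\cap B_j^x\cap B_j^y$, $O^x_{i,j}=\{z: x_i+w_i\le x_j\}$, $O^y_{i,j}=\{z: y_i+h_i\le y_j\}$. Define the closed convex sets $C_{i,j,\mathsf{L}}=O^x_{i,j}\cap B_{i,j}$, $C_{i,j,\mathsf{R}}=O^x_{j,i}\cap B_{i,j}$, $C_{i,j,\mathsf{B}}=O^y_{i,j}\cap B_{i,j}$, $C_{i,j,\mathsf{A}}=O^y_{j,i}\cap B_{i,j}$ (assumed nonempty) and $C_{i,j}=C_{i,j,\mathsf{L}}\cup C_{i,j,\mathsf{R}}\cup C_{i,j,\mathsf{B}}\cup C_{i,j,\mathsf{A}}$. Enumerate the pairs $1\le i<j\le N_m$ by $t=1,\dots,M$ and write $C_t=C_{i,j}$, $C_{t,k}=C_{i,j,k}$ for $k\in\{\mathsf{L},\mathsf{R},\mathsf{B},\mathsf{A}\}$. With $\|\cdot\|$ the Euclidean norm and $\mathrm{d}(z,C)=\inf_{c\in C}\|z-c\|$: $\mathcal{P}_t(z)=\{c\in C_t:\|z-c\|=\mathrm{d}(z,C_t)\}$,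 $P_{t,k}(z)$ is the unique nearest point of $C_{t,k}$ to $z$; for a fixed relaxation parameter $\lambda\in(0,2)$, $\mathcal{T}_t(z)=\{z+\lambda(p-z):p\in\mathcal{P}_t(z)\}$ and $F(\mathcal{T}_t)=\{z: z\in\mathcal{T}_t(z)\}$. Active indices: $K_t(z)=\{k: P_{t,k}(z)\in\mathcal{P}_t(z)\}$. $d_{esc}(z^*,C_t)=\inf\{\|z-z^*\| : z\notin C_{t,k}\text{ for some }k\in K_t(z^* )\}$; $d_{sep}(z^*,C_t)=\min\{\mathrm{d}(z^*,C_{t,k}) : k\notin K_t(z^* )\}$. $B(z,r)$ is the open Euclidean ball. A sequential MAP trajectory is a sequence with $z^{n+1}\in\mathcal{T}_{t_n}(z^n)$ for all $n\ge0$, where $t_n\in\{1,\dots,M\}$ and each sweep $\{t_{kM+1},\dots,t_{(k+1)M}\}$ equals $\{1,\dots,M\}$. *)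

From HB Require Import structures.
From mathcomp Require Import all_boot all_order all_algebra.
From mathcomp Require Import all_classical all_reals.
Set Implicit Arguments. Unset Strict Implicit. Unset Printing Implicit Defensive.
Import Order.TTheory GRing.Theory Num.Theory.
Local Open Scope ring_scope.
Local Open Scope classical_set_scope.

(* The four relative positions L, R, B (below), A (above). *)
Inductive side := SL | SR | SB | SA.

Section MAPDefs.
Variables (R : realType) (N Nm : nat) (W H : R) (w h : 'I_N -> R).

(* Points z = (x, y) of R^(2N), x, y in R^N (coordinates indexed by 'I_N,
   i.e. 0-based: box i of the paper is index i-1 here). *)
Definition pt := (('I_N -> R) * ('I_N -> R))%type.

Definition ptsub (z c : pt) : pt :=
  (fun i => z.1 i - c.1 i, fun i => z.2 i - c.2 i).

Definition ptnorm (z : pt) : R :=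
  Num.sqrt (\sum_(i < N) z.1 i ^+ 2 + \sum_(i < N) z.2 i ^+ 2).

Definition dist (z c : pt) : R := ptnorm (ptsub z c).

Definition relax (lam : R) (z p : pt) : pt :=
  (fun i => z.1 i + lam * (p.1 i - z.1 i), fun i => z.2 i + lam * (p.2 i - z.2 i)).

(* Pairs (i, j) with i < j < Nm (0-based): these are the indices t = 1..M. *)
Definition pairT := {p : 'I_N * 'I_N | (p.1 < p.2)%N && (p.2 < Nm)%N}.

Definition Bx (i : 'I_N) : set pt := [set z | 0 <= z.1 i <= W - w i].
Definition By (i : 'I_N) : set pt := [set z | 0 <= z.2 i <= H - h i].
Definition Bij (i j : 'I_N) : set pt := Bx i `&` By i `&` Bx j `&` By j.
Definition Ox (i j : 'I_N) : set pt := [set z | z.1 i + w i <= z.1 j].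
Definition Oy (i j : 'I_N) : set pt := [set z | z.2 i + h i <= z.2 j].

Definition Cijk (i j : 'I_N) (k : side) : set pt :=
  match k with
  | SL => Ox i j `&` Bij i j
  | SR => Ox j i `&` Bij i j
  | SB => Oy i j `&` Bij i j
  | SA => Oy j i `&` Bij i j
  end.

Definition Cij (i j : 'I_N) : set pt :=
  Cijk i j SL `|` Cijk i j SR `|` Cijk i j SB `|` Cijk i j SA.

Definition Ct (t : pairT) : set pt := Cij (val t).1 (val t).2.
Definition Ctk (t : pairT) (k : side) : set pt := Cijk (val t).1 (val t).2 k.

Definition dset (z : pt) (C : set pt) : R := inf [set dist z c | c in C].

Definition Pset (C : set pt) (z : pt) : set pt :=
  [set c | C c /\ dist z c = dset z C].

Definition Tmap (lam : R) (t : pairT) (z : pt) : set pt :=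
  [set relax lam z p | p in Pset (Ct t) z].

Definition Fix (lam : R) (t : pairT) : set pt := [set z | Tmap lam t z z].

(* active indices: k such that the (unique) nearest point P_{t,k}(z) of
   C_{t,k} belongs to P_t(z) *)
Definition Kset (t : pairT) (z : pt) : set side :=
  [set k | exists c, Pset (Ctk t k) z c /\ Pset (Ct t) z c].

Definition desc (zs : pt) (t : pairT) : R :=
  inf [set dist z zs | z in [set z | exists k, Kset t zs k /\ ~ Ctk t k z]].

Definition dsep (zs : pt) (t : pairT) : R :=
  inf [set dset zs (Ctk t k) | k in ~` Kset t zs].

Definition rt_primary (zs : pt) (t : pairT) : R :=
  Num.min (dsep zs t) (desc zs t).

Definition gfun (a b c d : R) : R := Num.norm ((a - b) + (c - d) / 2) / Num.sqrt 2.

(* Alternative choice of r_t; the number of active indices is always 1 or 2 at a common fixed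
   point, the last branch is unreachable there. *)
Definition rt_alt (zs : pt) (t : pairT) : R :=
  let K := Kset t zs in
  let ii := (val t).1 in let jj := (val t).2 in
  if pselect (exists k, K = [set k]) then
    Num.min (dsep zs t) ((dsep zs t + desc zs t) / 2)
  else if pselect (exists k1 k2, k1 <> k2 /\ K = [set k1] `|` [set k2]) then
    Num.min (gfun (zs.1 ii) (zs.1 jj) (w ii) (w jj)) (gfun (zs.2 ii) (zs.2 jj) (h ii) (h jj))
  else rt_primary zs t.

Definition ball_pt (zs : pt) (r : R) : set pt := [set z | dist z zs < r].

Definition MAP_traj (lam : R) (z : nat -> pt) (tt : nat -> pairT) : Prop :=
  (forall n, Tmap lam (tt n) (z n) (z n.+1)) /\
  (forall (k : nat) (p : pairT), exists n,
      (k * #|{: pairT}| < n <= k.+1 * #|{: pairT}|)%N /\ tt n = p).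

Definition attractor_claim (lam : R) (zs : pt) (rt : pairT -> R) : Prop :=
  let r := inf (range rt) in
  0 < r ->
  forall eps : R, 0 < eps -> eps < r ->
  forall (z : nat -> pt) (tt : nat -> pairT), MAP_traj lam z tt ->
  forall n0 : nat, ball_pt zs eps (z n0) ->
  (forall n, (n0 <= n)%N -> ball_pt zs eps (z n)) /\
  exists zt : pt, (forall t, Fix lam t zt) /\
    (forall e : R, 0 < e -> exists m, forall n, (m <= n)%N -> dist (z n) zt < e).

End MAPDefs.

(* Below each radius r_t, every nearest point of C_t to a point of the ball B(zs, eps) lies
   in one of the convex pieces C_{t,k} that contain zs: for the primary radius because the
   ball lies inside the active pieces, for the alternative radii because every point of an
   inactive piece is farther away than some point of an active one.  On that ball each relaxed
   projection is therefore a relaxed projection onto a convex set containing zs, so the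
   trajectory is Fejer monotone with respect to zs: it stays in the ball and its steps tend
   to zero.  By Bolzano-Weierstrass it has a cluster point; since every sweep projects onto
   every C_t, the cluster point lies in each closed set C_t, hence is a common fixed point,
   and the same local picture around it makes it the limit. *)

From HB Require Import structures.
From mathcomp Require Import all_boot all_order all_algebra.
From mathcomp Require Import all_classical all_reals all_analysis.
From mathcomp Require Import ring lra zify.
Import Order.TTheory GRing.Theory Num.Theory.
Import numFieldNormedType.Exports.
Local Open Scope ring_scope.
Local Open Scope classical_set_scope.
Set Implicit Arguments. Unset Strict Implicit. Unset Printing Implicit Defensive.

Section Euclid.
Variables (R : realType) (N : nat).
Local Notation pt := (pt R N).

Definition sqnorm (x : pt) : R := \sum_(i < N) x.1 i ^+ 2 + \sum_(i < N) x.2 i ^+ 2.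
Definition dotp (x y : pt) : R := \sum_(i < N) x.1 i * y.1 i + \sum_(i < N) x.2 i * y.2 i.
Definition lcomb (a : R) (x : pt) (b : R) (y : pt) : pt :=
  (fun i => a * x.1 i + b * y.1 i, fun i => a * x.2 i + b * y.2 i).

Lemma pt_ext (x y : pt) : (forall i, x.1 i = y.1 i) -> (forall i, x.2 i = y.2 i) -> x = y.
Proof.
case: x => x1 x2; case: y => y1 y2 /= e1 e2;
by rewrite (boolp.funext e1) (boolp.funext e2).
Qed.

Lemma sqnorm_lcomb a x b y :
  sqnorm (lcomb a x b y) = a ^+ 2 * sqnorm x + 2 * a * b * dotp x y + b ^+ 2 * sqnorm y.
Proof.
have sum_sq (f g : 'I_N -> R) : \sum_(i < N) (a * f i + b * g i) ^+ 2 =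
    a ^+ 2 * \sum_(i < N) f i ^+ 2 + 2 * a * b * \sum_(i < N) f i * g i
    + b ^+ 2 * \sum_(i < N) g i ^+ 2.
  by rewrite !mulr_sumr -!big_split /=; apply: eq_bigr => i _; ring.
by rewrite /sqnorm /dotp /lcomb /= !sum_sq; ring.
Qed.

Lemma sum_sq_ge0 (f : 'I_N -> R) : 0 <= \sum_(i < N) f i ^+ 2.
Proof. by rewrite sumr_ge0 // => i _; rewrite sqr_ge0. Qed.

Lemma sqnorm_ge0 x : 0 <= sqnorm x.
Proof. by rewrite addr_ge0 ?sum_sq_ge0. Qed.

Lemma sqr_coord2_le_sqnorm x i j : i != j ->
  x.1 i ^+ 2 + x.1 j ^+ 2 <= sqnorm x /\ x.2 i ^+ 2 + x.2 j ^+ 2 <= sqnorm x.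
Proof.
move=> ij; have two_terms (f : 'I_N -> R) : f i ^+ 2 + f j ^+ 2 <= \sum_(k < N) f k ^+ 2.
  rewrite (bigD1 i) // (bigD1 j) 1?eq_sym //= addrA lerDl.
  by rewrite sumr_ge0 // => k _; rewrite sqr_ge0.
have := two_terms x.1; have := two_terms x.2.
have := sum_sq_ge0 x.1; have := sum_sq_ge0 x.2; rewrite /sqnorm; lra.
Qed.

Lemma sqr_coord_le_sqnorm x i : x.1 i ^+ 2 <= sqnorm x /\ x.2 i ^+ 2 <= sqnorm x.
Proof.
have one_term (f : 'I_N -> R) : f i ^+ 2 <= \sum_(k < N) f k ^+ 2.
  by rewrite (bigD1 i) //= lerDl sumr_ge0 // => k _; rewrite sqr_ge0.
have := one_term x.1; have := one_term x.2.
have := sum_sq_ge0 x.1; have := sum_sq_ge0 x.2; rewrite /sqnorm; lra.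
Qed.

Lemma sqnorm_le_coord x d :
  (forall i, `|x.1 i| <= d /\ `|x.2 i| <= d) -> sqnorm x <= (N + N)%:R * d ^+ 2.
Proof.
move=> xd; rewrite natrD mulrDl /sqnorm.
have sum_le (f : 'I_N -> R) : (forall i, `|f i| <= d) -> \sum_(i < N) f i ^+ 2 <= N%:R * d ^+ 2.
  move=> fd; rewrite mulr_natl -[X in _ *+ X]card_ord -sumr_const; apply: ler_sum => i _.
  by rewrite -real_normK ?num_real // lerXn2r ?nnegrE ?(le_trans _ (fd i)).
by rewrite lerD // sum_le // => i; case: (xd i).
Qed.

Lemma cauchy_schwarz x y : dotp x y <= Num.sqrt (sqnorm x) * Num.sqrt (sqnorm y).
Proof.
suff : dotp x y ^+ 2 <= sqnorm x * sqnorm y.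
  move=> h; apply: le_trans (ler_norm _) _.
  by rewrite -sqrtrM ?sqnorm_ge0 // -sqrtr_sqr ler_sqrt // mulr_ge0 ?sqnorm_ge0.
have quad s : 0 <= sqnorm x + 2 * s * dotp x y + s ^+ 2 * sqnorm y.
  by have := sqnorm_ge0 (lcomb 1 x s y); rewrite sqnorm_lcomb; lra.
have := sqnorm_ge0 x; have := sqnorm_ge0 y.
have [y0|] := ltrP 0 (sqnorm y).
  have := quad (- (dotp x y / sqnorm y)).
  have -> : sqnorm x + 2 * - (dotp x y / sqnorm y) * dotp x y
      + (- (dotp x y / sqnorm y)) ^+ 2 * sqnorm y = sqnorm x - dotp x y ^+ 2 / sqnorm y.
    by field; rewrite gt_eqF.
  by rewrite subr_ge0 ler_pdivrMr // mulrC.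
move=> yle0 y0 x0; have y_0 : sqnorm y = 0 by apply/eqP; rewrite eq_le yle0.
rewrite y_0 in quad *.
have [->|dne0] := eqVneq (dotp x y) 0; first by lra.
have := quad (- (sqnorm x + 1) / (2 * dotp x y)).
rewrite mulr0 addr0.
have -> : 2 * (- (sqnorm x + 1) / (2 * dotp x y)) * dotp x y = - (sqnorm x + 1) by field.
lra.
Qed.

Lemma distE (x y : pt) : dist x y = Num.sqrt (sqnorm (ptsub x y)).
Proof. by []. Qed.

Lemma sqr_dist (x y : pt) : dist x y ^+ 2 = sqnorm (ptsub x y).
Proof. by rewrite sqr_sqrtr ?sqnorm_ge0. Qed.

Lemma dist_ge0 (x y : pt) : 0 <= dist x y.
Proof. exact: sqrtr_ge0. Qed.

Lemma dist_le_sqnorm (x y u v : pt) :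
  (dist x y <= dist u v) = (sqnorm (ptsub x y) <= sqnorm (ptsub u v)).
Proof. by rewrite /dist /ptnorm ler_sqrt ?sqnorm_ge0. Qed.

Lemma dist_triangle (x y z : pt) : dist x z <= dist x y + dist y z.
Proof.
rewrite !distE.
have -> : ptsub x z = lcomb 1 (ptsub x y) 1 (ptsub y z) by apply: pt_ext => i /=; ring.
rewrite -[X in _ <= X]ger0_norm ?addr_ge0 ?sqrtr_ge0 // -sqrtr_sqr ler_sqrt ?sqr_ge0 //.
have := cauchy_schwarz (ptsub x y) (ptsub y z).
by rewrite sqnorm_lcomb sqrrD !sqr_sqrtr ?sqnorm_ge0 //; lra.
Qed.

Lemma dist_lcomb_self a (x y : pt) :
  Num.sqrt (sqnorm (lcomb a (ptsub x y) 0 (ptsub x y))) = `|a| * dist x y.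
Proof.
by rewrite sqnorm_lcomb expr0n /= !(mul0r, mulr0, addr0) sqrtrM ?sqr_ge0 // sqrtr_sqr.
Qed.

Lemma distC (x y : pt) : dist x y = dist y x.
Proof.
rewrite [RHS]distE.
have -> : ptsub y x = lcomb (-1) (ptsub x y) 0 (ptsub x y) by apply: pt_ext => i /=; ring.
by rewrite dist_lcomb_self normrN normr1 mul1r.
Qed.

Lemma dist_xx (x : pt) : dist x x = 0.
Proof.
rewrite distE.
have -> : ptsub x x = lcomb 0 (ptsub x x) 0 (ptsub x x) by apply: pt_ext => i /=; ring.
by rewrite dist_lcomb_self normr0 mul0r.
Qed.

Lemma dist_coord (x y : pt) i :
  `|x.1 i - y.1 i| <= dist x y /\ `|x.2 i - y.2 i| <= dist x y.
Proof.
have [h1 h2] := sqr_coord_le_sqnorm (ptsub x y) i.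
by rewrite -!sqrtr_sqr !ler_sqrt ?sqnorm_ge0.
Qed.

Lemma dist_eq0 (x y : pt) : dist x y = 0 -> x = y.
Proof.
move=> d0; apply: pt_ext => i; have [h1 h2] := dist_coord x y i; rewrite d0 in h1 h2;
by apply/eqP; rewrite -subr_eq0 -normr_le0.
Qed.

Lemma segment_point (x z : pt) s : 0 <= s <= dist z x ->
  exists y, dist y x = s /\ dist z y = dist z x - s.
Proof.
case/andP=> s0 sd; have [d0|dpos] := eqVneq (dist z x) 0.
  have -> : s = 0 by apply/eqP; rewrite eq_le s0 andbT -d0.
  by exists x; rewrite dist_xx d0 subr0.
have [t [t0 t1 tE]] : exists t, [/\ 0 <= t, t <= 1 & t * dist z x = s].
  have d0 : 0 < dist z x by rewrite lt_def dpos dist_ge0.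
  by exists (s / dist z x); rewrite divr_ge0 ?ler_pdivrMr ?mul1r ?divfK ?dist_ge0.
exists (lcomb (1 - t) x t z); rewrite !distE.
have -> : ptsub (lcomb (1 - t) x t z) x = lcomb t (ptsub z x) 0 (ptsub z x).
  by apply: pt_ext => i /=; ring.
have -> : ptsub z (lcomb (1 - t) x t z) = lcomb (1 - t) (ptsub z x) 0 (ptsub z x).
  by apply: pt_ext => i /=; ring.
rewrite !dist_lcomb_self !ger0_norm ?subr_ge0 // -distE tE.
by rewrite mulrBl mul1r tE.
Qed.

End Euclid.

Section BolzanoWeierstrass.
Variable R : realType.

Lemma increasing_seq_ge (f : nat -> nat) : increasing_seq f -> forall n, (n <= f n)%N.
Proof.
move=> /increasing_seqP f_incr; elim=> // n IH.
exact: leq_ltn_trans IH (f_incr n).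
Qed.

Lemma increasing_seq_cvg (f : nat -> nat) : increasing_seq f -> f @ \oo --> \oo.
Proof.
move=> f_incr P [n _ Pn]; exists n => // m /= nm; apply: Pn.
exact: leq_trans nm (increasing_seq_ge f_incr m).
Qed.

Lemma bolzano_weierstrass_fin (I : finType) (u : I -> R ^nat) :
  (forall i, bounded_fun (u i)) ->
  exists2 f : nat -> nat, increasing_seq f & forall i, cvgn (u i \o f).
Proof.
move=> u_bnd.
suff /(_ (enum I)) [f f_incr f_cvg] : forall s : seq I,
    exists2 f : nat -> nat, increasing_seq f & forall i, i \in s -> cvgn (u i \o f).
  by exists f => // i; apply: f_cvg; rewrite mem_enum.
elim=> [|a s [f f_incr f_cvg]]; first by exists id.
have uaf_bnd : bounded_fun (u a \o f).
  by case: (u_bnd a) => M [Mr uaM]; exists M; split => // x xM n _; exact: uaM.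
have [g g_incr ug_cvg] := bolzano_weierstrass uaf_bnd.
exists (f \o g); first by move=> m n /=; rewrite f_incr; exact: g_incr.
move=> i; rewrite inE => /predU1P [-> //|/f_cvg /cvg_ex [l ufl]].
by apply/cvg_ex; exists l; apply: cvg_comp (increasing_seq_cvg g_incr) ufl.
Qed.

End BolzanoWeierstrass.

Section Cluster.
Variables (R : realType) (N : nat).
Local Notation pt := (pt R N).

Lemma bounded_cluster (u : nat -> pt) (c : pt) (B : R) :
  (forall n, dist (u n) c <= B) ->
  exists zt : pt, forall e, 0 < e -> forall m, exists2 n, (m <= n)%N & dist (u n) zt < e.
Proof.
move=> uB.
pose coord (ci : bool * 'I_N) (x : pt) := if ci.1 then x.1 ci.2 else x.2 ci.2.
have coord_bnd ci : bounded_fun (fun n => coord ci (u n)).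
  exists (`|coord ci c| + B); split; first exact: num_real.
  move=> M /ltW BM n _; apply: le_trans BM; have [d1 d2] := dist_coord (u n) c ci.2.
  have := ler_normD (coord ci (u n) - coord ci c) (coord ci c); rewrite subrK.
  by have := uB n; rewrite /coord; case: ci.1; lra.
have [f f_incr f_cvg] := bolzano_weierstrass_fin coord_bnd.
pose l ci := limn (fun n => coord ci (u (f n))).
exists (fun i => l (true, i), fun i => l (false, i)) => e e0 m.
have k0 : 0 <= ((N + N)%:R : R) by [].
have [d d0 ed] : exists2 d, 0 < d & e = ((N + N)%:R + 1) * d.
  by exists (e / ((N + N)%:R + 1)); rewrite ?divr_gt0 1?mulrC ?divfK //; lra.
have : \forall n \near \oo, forall ci, `|l ci - coord ci (u (f n))| < d.
  apply: filter_forall => ci.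
  by move/cvgrPdist_lt: (f_cvg ci) => /(_ d d0).
case=> K _ fK; exists (f (maxn K m)).
  exact: leq_trans (leq_maxr K m) (increasing_seq_ge f_incr _).
rewrite -(@ltr_pXn2r _ 2) ?nnegrE ?dist_ge0 ?ltW // sqr_dist.
apply: le_lt_trans (sqnorm_le_coord (d := d) _) _.
  move=> i; have Kd := fK (maxn K m) (leq_maxl K m).
  by rewrite /= !(distrC ((u _).1 i)) !(distrC ((u _).2 i)); split; apply: ltW;
    [apply: (Kd (true, i)) | apply: (Kd (false, i))].
rewrite ed.
have dd0 : 0 < d ^+ 2 by rewrite exprn_gt0.
by rewrite exprMn ltr_pM2r //; nra.
Qed.

End Cluster.

Definition side_ord (k : side) : 'I_4 :=
  match k with SL => inord 0 | SR => inord 1 | SB => inord 2 | SA => inord 3 end.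
Definition ord_side (i : 'I_4) : side :=
  match val i with 0 => SL | 1 => SR | 2 => SB | _ => SA end.
Lemma side_ordK : cancel side_ord ord_side. Proof. by case; rewrite /ord_side /= inordK. Qed.
HB.instance Definition _ := Finite.copy side (can_type side_ordK).

Section Pieces.
Variables (R : realType) (N : nat) (W H : R) (w h : 'I_N -> R).
Local Notation pt := (pt R N).
Local Notation Cijk := (Cijk W H w h).

Definition sep_margin (i j : 'I_N) (k : side) (x : pt) : R :=
  match k with
  | SL => x.1 j - x.1 i - w i
  | SR => x.1 i - x.1 j - w j
  | SB => x.2 j - x.2 i - h i
  | SA => x.2 i - x.2 j - h j
  end.

Definition in_box (i : 'I_N) (x : pt) : Prop :=
  [/\ 0 <= x.1 i, 0 <= W - w i - x.1 i, 0 <= x.2 i & 0 <= H - h i - x.2 i].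

Lemma CijkP i j k x : Cijk i j k x <-> [/\ 0 <= sep_margin i j k x, in_box i x & in_box j x].
Proof.
rewrite /in_box; case: k; rewrite /= /Ox /Oy /Bij /Bx /By /=;
split => [[m [[[/andP[a1 a2] /andP[b1 b2]] /andP[c1 c2]] /andP[d1 d2]]]
         | [m [a1 a2 b1 b2] [c1 c2 d1 d2]]];
by (repeat split; try (apply/andP; split); lra).
Qed.

Lemma in_box_convex i (x y : pt) t : 0 <= t <= 1 ->
  in_box i x -> in_box i y -> in_box i (lcomb (1 - t) x t y).
Proof. by move=> /andP[t0 t1] [a1 a2 a3 a4] [b1 b2 b3 b4]; split => /=; nra. Qed.

Lemma sep_margin_lcomb i j k a (x : pt) b (y : pt) : a + b = 1 ->
  sep_margin i j k (lcomb a x b y) = a * sep_margin i j k x + b * sep_margin i j k y.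
Proof.
move=> ab; have -> : a = 1 - b by lra.
by case: k => /=; ring.
Qed.

Lemma Cijk_convex i j k (x y : pt) t : 0 <= t <= 1 ->
  Cijk i j k x -> Cijk i j k y -> Cijk i j k (lcomb (1 - t) x t y).
Proof.
move=> t01 /CijkP[mx bix bjx] /CijkP[my biy bjy]; case/andP: (t01) => t0 t1.
apply/CijkP; split; try exact: in_box_convex.
by rewrite sep_margin_lcomb ?subrK // addr_ge0 // mulr_ge0 // subr_ge0.
Qed.

Lemma Cijk_closed i j k (x : pt) :
  (forall e, 0 < e -> exists2 p, dist p x < e & Cijk i j k p) -> Cijk i j k x.
Proof.
move=> near_x.
(* each constraint involves at most two coordinates, each within e / 2 of those of x *)
apply/CijkP; rewrite /in_box; split; [|split|split]; apply/ler_addgt0Pr => e e0;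
  have [p px /CijkP[mp [? ? ? ?] [? ? ? ?]]] := near_x (e / 2) (divr_gt0 e0 (ltr0Sn _ 1));
  have [/ler_normlP[? ?] /ler_normlP[? ?]] := dist_coord p x i;
  have [/ler_normlP[? ?] /ler_normlP[? ?]] := dist_coord p x j;
  move: mp; clear near_x; case: k => /= *; lra.
Qed.

Lemma not_Cijk_gap i j k (x : pt) : ~ Cijk i j k x ->
  exists2 g, 0 < g & forall p, dist p x < g -> ~ Cijk i j k p.
Proof.
move=> nCx; apply: contrapT => no_gap; apply/nCx/Cijk_closed => e e0.
apply: contrapT => no_p; apply: no_gap; exists e => // p px Cp.
exact: no_p (ex_intro2 _ _ p px Cp).
Qed.

End Pieces.

Section InfNonneg.
Variable R : realType.

Lemma inf_le_ge0 (E : set R) x : (forall y, E y -> 0 <= y) -> E x -> inf E <= x.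
Proof. by move=> E_ge0 Ex; apply: ge_inf Ex; exists 0 => y /E_ge0. Qed.

Lemma inf_ge0 (E : set R) : (forall y, E y -> 0 <= y) -> 0 <= inf E.
Proof.
move=> E_ge0; have [->|/set0P E_neq0] := eqVneq E set0; first by rewrite inf0.
exact: lb_le_inf.
Qed.

Lemma finite_pos_lower_bound (T : finType) (g : T -> R) :
  (forall t, 0 < g t) -> exists2 e, 0 < e & forall t, e <= g t.
Proof.
move=> g_gt0; exists (\big[Num.min/1]_t g t).
  by apply: (big_ind (fun e => 0 < e)) => // a b a0 b0; rewrite lt_min a0.
by move=> t; rewrite (bigD1 t) //= ge_min lexx.
Qed.

End InfNonneg.

Section Projections.
Variables (R : realType) (N Nm : nat) (W H : R) (w h : 'I_N -> R).
Local Notation pt := (pt R N).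
Local Notation Ct := (@Ct R N Nm W H w h).
Local Notation Ctk := (@Ctk R N Nm W H w h).

Lemma dset_le (z : pt) (C : set pt) c : C c -> dset z C <= dist z c.
Proof. by move=> Cc; apply: inf_le_ge0 => [_ [c' _ <-]|]; [exact: dist_ge0 | exists c]. Qed.

Lemma dset_ge0 (z : pt) (C : set pt) : 0 <= dset z C.
Proof. by apply: inf_ge0 => _ [c _ <-]; exact: dist_ge0. Qed.

Lemma PsetP (C : set pt) z p :
  Pset C z p <-> C p /\ forall c, C c -> dist z p <= dist z c.
Proof.
split=> [[Cp ->]|[Cp p_min]]; first by split=> // c; exact: dset_le.
split=> //; apply/eqP; rewrite eq_le dset_le // andbT.
by apply: lb_le_inf => [|_ [c Cc <-]]; [exists (dist z p), p | exact: p_min].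
Qed.

Lemma Pset_id (C : set pt) z : C z -> Pset C z z.
Proof. by move=> Cz; apply/PsetP; split=> // c _; rewrite dist_xx dist_ge0. Qed.

Lemma Pset_idE (C : set pt) z p : C z -> Pset C z p -> p = z.
Proof.
move=> Cz /PsetP[_ /(_ z Cz)]; rewrite dist_xx => zp0.
by apply/esym/dist_eq0/eqP; rewrite eq_le zp0 dist_ge0.
Qed.

Lemma Ctk_Ct t k c : Ctk t k c -> Ct t c.
Proof.
by rewrite /Ct /Ctk /Cij; case: k; [left; left; left|left; left; right|left; right|right].
Qed.

Lemma Ct_Ctk t c : Ct t c -> exists k, Ctk t k c.
Proof. by case=> [[[Cc|Cc]|Cc]|Cc]; [exists SL|exists SR|exists SB|exists SA]. Qed.

(* p is also nearest to z within the convex piece, whence the obtuse-angle criterion *)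
Lemma Pset_dotp_le0 t k (z p s : pt) : Pset (Ct t) z p -> Ctk t k s -> Ctk t k p ->
  dotp (ptsub z p) (ptsub s p) <= 0.
Proof.
move=> /PsetP[_ p_min] Cs Cp; set a := dotp _ _; set b := sqnorm (ptsub s p).
have small_step tau : 0 < tau <= 1 -> 2 * a <= tau * b.
  case/andP=> tau0 tau1; have tau01 : 0 <= tau <= 1 by rewrite ltW.
  move: (p_min _ (Ctk_Ct (Cijk_convex tau01 Cp Cs))); rewrite dist_le_sqnorm.
  have -> : ptsub z (lcomb (1 - tau) p tau s) = lcomb 1 (ptsub z p) (- tau) (ptsub s p).
    by apply: pt_ext => i /=; ring.
  rewrite sqnorm_lcomb -/a -/b => ineq.
  by rewrite -(ler_pM2l tau0); nra.
have b0 : 0 <= b by exact: sqnorm_ge0.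
rewrite leNgt; apply/negP => a0.
have ba0 : 0 < b + a by lra.
have tau0 : 0 < a / (b + a) by rewrite divr_gt0.
have tau1 : a / (b + a) <= 1 by rewrite ler_pdivrMr // mul1r; lra.
have tauE : a / (b + a) * (b + a) = a by rewrite divfK // gt_eqF.
by have := small_step (a / (b + a)); rewrite tau0 tau1 => /(_ isT); nra.
Qed.

Lemma relax_fejer t k lam (z p s : pt) : 0 < lam < 2 ->
  Pset (Ct t) z p -> Ctk t k s -> Ctk t k p ->
  sqnorm (ptsub (relax lam z p) s) <= sqnorm (ptsub z s) - lam * (2 - lam) * sqnorm (ptsub p z).
Proof.
move=> /andP[lam0 lam2] Pp Cs Cp; have obtuse := Pset_dotp_le0 Pp Cs Cp.
have -> : ptsub (relax lam z p) s = lcomb (1 - lam) (ptsub z p) (-1) (ptsub s p).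
  by apply: pt_ext => i /=; ring.
have -> : ptsub z s = lcomb 1 (ptsub z p) (-1) (ptsub s p) by apply: pt_ext => i /=; ring.
have -> : ptsub p z = lcomb (-1) (ptsub z p) 0 (ptsub z p) by apply: pt_ext => i /=; ring.
rewrite !sqnorm_lcomb; nra.
Qed.

Lemma dist_relax lam (z p : pt) : 0 <= lam -> dist (relax lam z p) z = lam * dist p z.
Proof.
move=> lam0; rewrite distE.
have -> : ptsub (relax lam z p) z = lcomb lam (ptsub p z) 0 (ptsub p z).
  by apply: pt_ext => i /=; ring.
by rewrite dist_lcomb_self ger0_norm.
Qed.

Lemma Ct_Fix lam t (x : pt) : Ct t x -> Fix W H w h lam t x.
Proof. by move=> Cx; exists x; [exact: Pset_id | apply: pt_ext => i /=; ring]. Qed.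

Lemma Fix_Ct lam t (x : pt) : lam != 0 -> Fix W H w h lam t x -> Ct t x.
Proof.
move=> lam0 [p Pp xE]; suff <- : p = x by case: Pp.
have coordE (a b : R) : a + lam * (b - a) = a -> b = a.
  move=> abE; have : lam * (b - a) == 0 by apply/eqP; lra.
  by rewrite mulf_eq0 (negPf lam0) subr_eq0 => /eqP.
apply: pt_ext => i; apply: coordE; first exact: (congr1 (fun y => y.1 i) xE).
exact: (congr1 (fun y => y.2 i) xE).
Qed.

End Projections.

Section Trajectory.
Variables (R : realType) (N Nm : nat) (W H : R) (w h : 'I_N -> R) (lam : R).
Local Notation pt := (pt R N).
Local Notation Ct := (@Ct R N Nm W H w h).
Local Notation Ctk := (@Ctk R N Nm W H w h).
Local Notation Tmap := (@Tmap R N Nm W H w h lam).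
Hypothesis lam02 : 0 < lam < 2.

Definition shares_piece_at (c : pt) (r : R) (t : pairT N Nm) : Prop :=
  forall z, dist z c < r -> forall p, Pset (Ct t) z p -> exists k, Ctk t k c /\ Ctk t k p.

Definition shares_piece (c : pt) (r : R) : Prop := forall t, shares_piece_at c r t.

Lemma shares_piece_le c r r' : r' <= r -> shares_piece c r -> shares_piece c r'.
Proof. by move=> r'r cr t z zc; apply: cr; exact: lt_le_trans r'r. Qed.

Let kappa_gt0 : 0 < lam * (2 - lam).
Proof. by case/andP: lam02 => ? ?; apply: mulr_gt0 => //; lra. Qed.

Lemma Tmap_fejer c r t (z z' : pt) : shares_piece c r -> dist z c < r -> Tmap t z z' ->
  exists2 p, z' = relax lam z p &
    sqnorm (ptsub z' c) <= sqnorm (ptsub z c) - lam * (2 - lam) * sqnorm (ptsub p z).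
Proof.
move=> cr zc [p Pp <-]; exists p => //.
by have [k [Cc Cp]] := cr t _ zc _ Pp; exact: relax_fejer lam02 Pp Cc Cp.
Qed.

Lemma Tmap_dist_le c r t (z z' : pt) : shares_piece c r -> dist z c < r -> Tmap t z z' ->
  dist z' c <= dist z c.
Proof.
move=> cr zc /(Tmap_fejer cr zc)[p _ fejer]; rewrite dist_le_sqnorm.
by have := sqnorm_ge0 (ptsub p z); have := kappa_gt0; nra.
Qed.

Variables (z : nat -> pt) (tt : nat -> pairT N Nm) (c : pt) (r : R) (n0 : nat).
Hypothesis z_traj : forall n, Tmap (tt n) (z n) (z n.+1).
Hypothesis c_shares : shares_piece c r.
Hypothesis z_n0 : dist (z n0) c < r.

Lemma traj_in_ball n : (n0 <= n)%N -> dist (z n) c < r.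
Proof.
elim: n => [|n IH]; first by rewrite leqn0 => /eqP <-.
rewrite leq_eqVlt => /orP[/eqP <- //|/IH zn].
exact: le_lt_trans (Tmap_dist_le c_shares zn (z_traj n)) zn.
Qed.

Lemma traj_dist_nonincr m n : (n0 <= m)%N -> (m <= n)%N -> dist (z n) c <= dist (z m) c.
Proof.
move=> n0m; elim: n => [|n IH]; first by rewrite leqn0 => /eqP ->.
rewrite leq_eqVlt => /orP[/eqP <- //|mn]; apply: le_trans (IH mn).
exact: Tmap_dist_le c_shares (traj_in_ball (leq_trans n0m mn)) (z_traj n).
Qed.

Lemma traj_steps_small eta : 0 < eta ->
  exists m0, forall n, (m0 <= n)%N -> dist (z n.+1) (z n) < eta.
Proof.
move=> eta0; pose V n := sqnorm (ptsub (z n) c).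
pose E := [set V n | n in [set n | (n0 <= n)%N]].
have E_ge0 y : E y -> 0 <= y by case=> n _ <-; exact: sqnorm_ge0.
have E_inf : has_inf E by split; [exists (V n0), n0 => /= | exists 0 => y /E_ge0].
have delta0 : 0 < eta ^+ 2 * (lam * (2 - lam)) / 4.
  by rewrite divr_gt0 // mulr_gt0 // exprn_gt0.
have [_ [m0 n0m0 <-] Vm0] := inf_adherent delta0 E_inf.
exists m0 => n m0n; have n0n := leq_trans n0m0 m0n.
have [p zE fejer] := Tmap_fejer c_shares (traj_in_ball n0n) (z_traj n).
have Vn_le : V n <= V m0 by rewrite /V -dist_le_sqnorm traj_dist_nonincr.
have inf_le : inf E <= V n.+1 by apply: inf_le_ge0 => //; exists n.+1 => //=; apply: leqW.
have proj_small : dist p (z n) ^+ 2 < (eta / 2) ^+ 2.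
  rewrite sqr_dist expr_div_n; move: fejer Vm0 Vn_le inf_le; rewrite /V.
  by have := kappa_gt0; have := sqnorm_ge0 (ptsub p (z n)); nra.
case/andP: lam02 => lam0 lam2; rewrite zE dist_relax ?ltW //.
rewrite ltr_pXn2r ?nnegrE ?dist_ge0 ?divr_ge0 ?ltW // in proj_small.
have := dist_ge0 p (z n); nra.
Qed.

Lemma traj_dist_shift m0 eta : (forall n, (m0 <= n)%N -> dist (z n.+1) (z n) < eta) ->
  forall n L, (m0 <= n)%N -> dist (z (n + L)) (z n) <= L%:R * eta.
Proof.
move=> steps n L m0n; elim: L => [|L IH]; first by rewrite addn0 dist_xx mul0r.
rewrite addnS -[L.+1]addn1 natrD mulrDl mul1r.
apply: le_trans (dist_triangle _ (z (n + L)) _) _.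
by have := steps (n + L) (leq_trans m0n (leq_addr _ _)); lra.
Qed.

End Trajectory.

Section Limit.
Variables (R : realType) (N Nm : nat) (W H : R) (w h : 'I_N -> R) (lam : R).
Local Notation pt := (pt R N).
Local Notation Ct := (@Ct R N Nm W H w h).
Local Notation Ctk := (@Ctk R N Nm W H w h).
Local Notation shares_piece := (@shares_piece R N Nm W H w h).
Hypothesis lam02 : 0 < lam < 2.

Lemma uniform_gap (x : pt) : exists2 g, 0 < g &
  forall t k p, ~ Ctk t k x -> dist p x < g -> ~ Ctk t k p.
Proof.
have gap (tk : pairT N Nm * side) : exists g, 0 < g /\
    (~ Ctk tk.1 tk.2 x -> forall p, dist p x < g -> ~ Ctk tk.1 tk.2 p).
  have [Cx|/not_Cijk_gap[g g0 gP]] := pselect (Ctk tk.1 tk.2 x); last by exists g.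
  by exists 1; split=> // /(_ Cx).
have [g gP] := boolp.choice gap.
have [e e0 eg] := finite_pos_lower_bound (fun tk => (gP tk).1).
exists e => // t k p nCx px; exact: (gP (t, k)).2 nCx p (lt_le_trans px (eg (t, k))).
Qed.

Lemma Ct_closed t (x : pt) : (forall e, 0 < e -> exists2 p, dist p x < e & Ct t p) -> Ct t x.
Proof.
move=> near_x; apply: contrapT => nCx; have [g g0 gap] := uniform_gap x.
have [p px /Ct_Ctk[k Cp]] := near_x g g0.
by apply: gap px Cp => /Ctk_Ct.
Qed.

Lemma common_point_shares_piece (x : pt) : (forall t, Ct t x) ->
  exists2 g, 0 < g & shares_piece x g.
Proof.
move=> Cx; have [g g0 gap] := uniform_gap x.
exists (g / 2) => [|t z zx p /PsetP[Cp p_min]]; first by rewrite divr_gt0.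
have [k Cpk] := Ct_Ctk Cp; exists k; split => //.
apply: contrapT => nCx; apply: gap nCx _ Cpk.
by have := p_min x (Cx t); have := dist_triangle p z x; rewrite (distC p z); lra.
Qed.

Variables (z : nat -> pt) (tt : nat -> pairT N Nm) (c : pt) (r : R) (n0 : nat).
Hypothesis z_MAP : MAP_traj W H w h lam z tt.
Hypothesis c_shares : shares_piece c r.
Hypothesis z_n0 : dist (z n0) c < r.

Lemma traj_cluster : exists zt : pt,
  forall e, 0 < e -> forall m, exists2 n, (m <= n)%N & dist (z n) zt < e.
Proof.
have [z_traj _] := z_MAP.
have [|zt zt_cl] := @bounded_cluster _ _ (fun n => z (n + n0)) c r.
  by move=> n; apply/ltW/(traj_in_ball lam02 z_traj c_shares z_n0)/leq_addl.
exists zt => e e0 m; have [n mn zn] := zt_cl e e0 m.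
by exists (n + n0) => //; exact: leq_trans mn (leq_addr _ _).
Qed.

Lemma traj_cluster_in_Ct (zt : pt) :
  (forall e, 0 < e -> forall m, exists2 n, (m <= n)%N & dist (z n) zt < e) ->
  forall t, Ct t zt.
Proof.
have [z_traj sweeps] := z_MAP; move=> zt_cl t; apply: Ct_closed => g g0.
have [lam0 lam2] : 0 < lam /\ lam < 2 by apply/andP.
set M := #|{: pairT N Nm}|; have M0 : (0 < M)%N by apply/card_gt0P; exists t.
have M1 : (1 <= M%:R :> R) by rewrite ler1n.
pose eta := lam * g / (8 * M%:R).
have etaE : eta * (8 * M%:R) = lam * g by rewrite divfK // mulf_neq0 // gt_eqF // ltr0n.
have eta0 : 0 < eta by rewrite divr_gt0 ?mulr_gt0 // ltr0n.
have [m0 steps] := traj_steps_small lam02 z_traj c_shares z_n0 eta0.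
have [n m0n zn] := zt_cl (g / 4) (divr_gt0 g0 (ltr0Sn _ 3)) m0.
(* the pair t is visited during the sweep following the one containing step n *)
have [n' [/andP[n'_lo n'_hi] tn']] := sweeps (n %/ M).+1 t.
have nn' : (n <= n')%N by have := ltn_ceil n M0; move: n'_lo; lia.
have n'n : (n' - n <= 2 * M)%N by have := leq_divM n M; move: n'_hi; rewrite !mulSn; lia.
have [p Pp zE] := z_traj n'; rewrite tn' in Pp.
exists p; last by case/PsetP: Pp.
have p_near : dist p (z n') < g / 8.
  have := steps n' (leq_trans m0n nn'); rewrite -zE dist_relax ?ltW // => step.
  have := dist_ge0 p (z n'); rewrite -(ltr_pM2l lam0); nra.
have zn'_near : dist (z n') (z n) <= g / 2.
  have := traj_dist_shift steps (n' - n) m0n; rewrite subnKC // => shift.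
  have : ((n' - n)%:R : R) <= 2 * M%:R by rewrite -natrM ler_nat.
  by have := ltW eta0; nra.
have := dist_triangle p (z n') zt; have := dist_triangle (z n') (z n) zt; lra.
Qed.

Lemma traj_attracted :
  exists zt : pt, (forall t : pairT N Nm, Fix W H w h lam t zt) /\
    (forall e : R, 0 < e -> exists m, forall n, (m <= n)%N -> dist (z n) zt < e).
Proof.
have [zt zt_cl] := traj_cluster; have zt_C := traj_cluster_in_Ct zt_cl.
exists zt; split=> [t|e e0]; first exact: Ct_Fix.
have [g g0 zt_sh] := common_point_shares_piece zt_C.
have e'0 : 0 < Num.min e g by rewrite lt_min e0.
have [n _ zn] := zt_cl _ e'0 0%N; exists n => m nm.
have [me_e me_g] : Num.min e g <= e /\ Num.min e g <= g by rewrite !ge_min !lexx orbT.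
have [z_traj _] := z_MAP.
exact: lt_le_trans (traj_in_ball lam02 z_traj (shares_piece_le me_g zt_sh) zn nm) me_e.
Qed.

End Limit.

Definition opp_side (k : side) : side :=
  match k with SL => SR | SR => SL | SB => SA | SA => SB end.

Section OppositePiece.
Variables (R : realType) (N : nat) (W H : R) (w h : 'I_N -> R).
Local Notation pt := (pt R N).
Local Notation Cijk := (Cijk W H w h).

Definition gap_bound (i j : 'I_N) (k : side) (s : pt) : R :=
  match k with
  | SL | SR => gfun (s.1 i) (s.1 j) (w i) (w j)
  | SB | SA => gfun (s.2 i) (s.2 j) (h i) (h j)
  end.

Lemma sqr_coord_diff_le i j (x y : pt) : i != j ->
  ((x.1 i - x.1 j) - (y.1 i - y.1 j)) ^+ 2 <= 2 * sqnorm (ptsub x y) /\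
  ((x.2 i - x.2 j) - (y.2 i - y.2 j)) ^+ 2 <= 2 * sqnorm (ptsub x y).
Proof.
move=> ij; have [/= c1 c2] := sqr_coord2_le_sqnorm (ptsub x y) ij.
have sqr_diff_le (a b : R) : (a - b) ^+ 2 <= 2 * (a ^+ 2 + b ^+ 2).
  by have := sqr_ge0 (a + b); nra.
have e1 : (x.1 i - x.1 j) - (y.1 i - y.1 j) = (x.1 i - y.1 i) - (x.1 j - y.1 j) by ring.
have e2 : (x.2 i - x.2 j) - (y.2 i - y.2 j) = (x.2 i - y.2 i) - (x.2 j - y.2 j) by ring.
by rewrite e1 e2; split; apply: le_trans (sqr_diff_le _ _) _; rewrite ler_pM2l.
Qed.

(* The segment from s to p crosses the hyperplane U = A at a point q; since s lies within
   a distance of z controlled by the margin U s - (A - B) / 2, q is closer to z than p. *)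
Lemma hyperplane_crossing (U : pt -> R) (A B : R) (s p z : pt) :
  (forall a x b y, U (lcomb a x b y) = a * U x + b * U y) ->
  (forall x y, (U x - U y) ^+ 2 <= 2 * sqnorm (ptsub x y)) ->
  0 < A + B -> A <= U s -> U p <= - B ->
  Num.sqrt 2 * dist z s < U s - (A - B) / 2 ->
  exists tau, [/\ 0 <= tau <= 1, U (lcomb (1 - tau) s tau p) = A &
     sqnorm (ptsub z (lcomb (1 - tau) s tau p)) < sqnorm (ptsub z p)].
Proof.
move=> U_lin U_lip AB As Bp zs_near.
set D := U s - U p; have D0 : 0 < D by rewrite /D; lra.
set tau := (U s - A) / D.
have tauD : tau * D = U s - A by rewrite /tau divfK // gt_eqF.
have tau0 : 0 <= tau by rewrite /tau divr_ge0 //; lra.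
have tau1 : tau < 1 by rewrite /tau ltr_pdivrMr // mul1r /D; lra.
exists tau; split; first by rewrite tau0 ltW.
  by rewrite U_lin; rewrite /D in tauD; lra.
have -> : ptsub z (lcomb (1 - tau) s tau p) = lcomb 1 (ptsub z s) (- tau) (ptsub p s).
  by apply: pt_ext => i /=; ring.
have -> : ptsub z p = lcomb 1 (ptsub z s) (-1) (ptsub p s) by apply: pt_ext => i /=; ring.
have cs := cauchy_schwarz (ptsub z s) (ptsub p s); rewrite -!distE in cs.
rewrite !sqnorm_lcomb -!sqr_dist; set a := dist z s in zs_near cs *; set sv := dist p s in cs *.
have r20 : 0 < Num.sqrt 2 :> R by rewrite sqrtr_gt0.
have r2E : Num.sqrt 2 ^+ 2 = 2 :> R by rewrite sqr_sqrtr.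
have a0 : 0 <= a by exact: dist_ge0.
have sv0 : 0 <= sv by exact: dist_ge0.
have D_le : D <= Num.sqrt 2 * sv.
  have : D ^+ 2 <= (Num.sqrt 2 * sv) ^+ 2.
    by rewrite exprMn r2E /sv sqr_dist /D -sqrrN opprB U_lip.
  by rewrite ler_pXn2r ?nnegrE ?mulr_ge0 // ltW.
have key : 2 * a < (1 + tau) * sv.
  have : (1 + tau) * D <= (1 + tau) * (Num.sqrt 2 * sv) by rewrite ler_wpM2l //; lra.
  rewrite -(ltr_pM2l r20) /D in tauD D_le *; lra.
have ip_lt : 2 * dotp (ptsub z s) (ptsub p s) < (1 + tau) * sv ^+ 2 by nra.
have : 0 < (1 - tau) * ((1 + tau) * sv ^+ 2 - 2 * dotp (ptsub z s) (ptsub p s)).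
  by rewrite mulr_gt0 // subr_gt0.
nra.
Qed.

Lemma opp_piece_closer i j k (s p z : pt) : i != j -> 0 < w i + w j -> 0 < h i + h j ->
  Cijk i j (opp_side k) s -> Cijk i j k p -> dist z s < gap_bound i j k s ->
  exists2 q, Cijk i j (opp_side k) q & sqnorm (ptsub z q) < sqnorm (ptsub z p).
Proof.
move=> ij wij hij /CijkP[ms bis bjs] /CijkP[mp bip bjp].
have r20 : 0 < Num.sqrt 2 :> R by rewrite sqrtr_gt0.
have cross (U : pt -> R) (A B : R) :
    (forall a x b y, U (lcomb a x b y) = a * U x + b * U y) ->
    (forall x y, (U x - U y) ^+ 2 <= 2 * sqnorm (ptsub x y)) ->
    (forall x, sep_margin w h i j (opp_side k) x = U x - A) ->
    0 < A + B -> A <= U s -> U p <= - B -> Num.sqrt 2 * dist z s < U s - (A - B) / 2 ->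
    exists2 q, Cijk i j (opp_side k) q & sqnorm (ptsub z q) < sqnorm (ptsub z p).
  move=> U_lin U_lip msE AB As Bp near.
  have [tau [tau01 UA closer]] := hyperplane_crossing U_lin U_lip AB As Bp near.
  exists (lcomb (1 - tau) s tau p) => //; apply/CijkP.
  by rewrite msE UA subrr; split=> //; apply: in_box_convex.
have ji : j != i by rewrite eq_sym.
case: k ms mp cross => /= ms mp cross; rewrite /gap_bound /gfun ltr_pdivlMr // mulrC.
- rewrite ger0_norm => [near|]; last lra.
  apply: (cross (fun x => x.1 i - x.1 j) (w j) (w i)) => /=; try lra.
  + by move=> *; ring.
  + by move=> x y; have [] := sqr_coord_diff_le x y ij.
  + by move=> x; ring.
- rewrite ler0_norm => [near|]; last lra.
  apply: (cross (fun x => x.1 j - x.1 i) (w i) (w j)) => /=; try lra.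
  + by move=> *; ring.
  + by move=> x y; have [] := sqr_coord_diff_le x y ji.
  + by move=> x; ring.
- rewrite ger0_norm => [near|]; last lra.
  apply: (cross (fun x => x.2 i - x.2 j) (h j) (h i)) => /=; try lra.
  + by move=> *; ring.
  + by move=> x y; have [] := sqr_coord_diff_le x y ij.
  + by move=> x; ring.
- rewrite ler0_norm => [near|]; last lra.
  apply: (cross (fun x => x.2 j - x.2 i) (h i) (h j)) => /=; try lra.
  + by move=> *; ring.
  + by move=> x y; have [] := sqr_coord_diff_le x y ji.
  + by move=> x; ring.
Qed.

End OppositePiece.

Section Radii.
Variables (R : realType) (N Nm : nat) (W H : R) (w h : 'I_N -> R).
Local Notation pt := (pt R N).
Local Notation Ct := (@Ct R N Nm W H w h).
Local Notation Ctk := (@Ctk R N Nm W H w h).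
Local Notation Kset := (@Kset R N Nm W H w h).
Local Notation desc := (@desc R N Nm W H w h).
Local Notation dsep := (@dsep R N Nm W H w h).
Local Notation shares_piece_at := (@shares_piece_at R N Nm W H w h).

Lemma KsetE t (zs : pt) k : Ct t zs -> Kset t zs k <-> Ctk t k zs.
Proof.
move=> Czs; split=> [[c [[Cc _] Pc]]|Ck]; last by exists zs; split; apply: Pset_id.
by rewrite -(Pset_idE Czs Pc).
Qed.

Lemma desc_le t (zs : pt) k y : Kset t zs k -> ~ Ctk t k y -> desc zs t <= dist y zs.
Proof.
move=> Kk nCy; apply: inf_le_ge0 => [_ [x _ <-]|]; first exact: dist_ge0.
by exists y => //; exists k.
Qed.

Lemma desc_ge0 t (zs : pt) : 0 <= desc zs t.
Proof. by apply: inf_ge0 => _ [x _ <-]; exact: dist_ge0. Qed.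

Lemma dsep_le t (zs : pt) k : ~ Kset t zs k -> dsep zs t <= dset zs (Ctk t k).
Proof.
move=> nKk; apply: inf_le_ge0 => [_ [k' _ <-]|]; [exact: dset_ge0 | by exists k].
Qed.

Lemma active_piece_ball t (zs : pt) k y : Kset t zs k -> dist y zs < desc zs t -> Ctk t k y.
Proof. by move=> Kk yzs; apply: contrapT => /(desc_le Kk); rewrite leNgt yzs. Qed.

Lemma shares_piece_desc t (zs : pt) eps : Ct t zs -> eps <= desc zs t ->
  shares_piece_at zs eps t.
Proof.
move=> Czs eps_le z zzs p Pp; have [k Ck] := Ct_Ctk Czs.
have Cz : Ctk t k z by apply: active_piece_ball ((KsetE _ Czs).2 Ck) _; lra.
by exists k; rewrite (Pset_idE (Ctk_Ct Cz) Pp).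
Qed.

Lemma active_piece_near t (zs z : pt) k a : Ct t zs -> Kset t zs k ->
  dist z zs < a -> 2 * dist z zs < a + desc zs t ->
  exists2 y, Ctk t k y & dist z y < a - dist z zs.
Proof.
move=> Czs Kk za za2; have d0 := dist_ge0 z zs; have e0 := desc_ge0 t zs.
have [zdesc|descz] := ltP (dist z zs) (desc zs t).
  by exists z; [exact: active_piece_ball Kk zdesc | rewrite dist_xx; lra].
(* walk from zs towards z, stopping just inside the ball of radius desc *)
have [s_le0|s_gt0] := lerP (2 * dist z zs - a + desc zs t) 0.
  by exists zs; [exact: (KsetE _ Czs).1 Kk | lra].
set s := (2 * dist z zs - a + desc zs t) / 2.
have s_range : 0 <= s <= dist z zs by apply/andP; split; rewrite /s; lra.
have [y [yzs zy]] := segment_point s_range.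
exists y; last by rewrite zy /s; lra.
by apply: active_piece_ball Kk _; rewrite yzs /s; lra.
Qed.

Lemma shares_piece_alt1 t (zs : pt) eps k0 : Ct t zs -> Kset t zs = [set k0] ->
  eps <= dsep zs t -> eps <= (dsep zs t + desc zs t) / 2 -> shares_piece_at zs eps t.
Proof.
move=> Czs K1 eps_sep eps_mid z zzs p /PsetP[Cp p_min].
have [k Cpk] := Ct_Ctk Cp; have [Czsk|nCzsk] := pselect (Ctk t k zs); first by exists k.
exfalso; have K0 : Kset t zs k0 by rewrite K1.
have sep_le : dsep zs t <= dist zs p.
  by apply: le_trans (dsep_le _) (dset_le _ Cpk); move/(KsetE _ Czs).
have z_sep : dist z zs < dsep zs t by lra.
have z_mid : 2 * dist z zs < dsep zs t + desc zs t by lra.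
have [y Cy zy] := active_piece_near Czs K0 z_sep z_mid.
by have := p_min y (Ctk_Ct Cy); have := dist_triangle zs z p; rewrite (distC zs z); lra.
Qed.

Lemma opp_side_active (Q : side -> Prop) (k' k1 k2 : side) : k1 <> k2 ->
  (forall k, Q k <-> k = k1 \/ k = k2) -> ~ Q k' -> ~ (Q SL /\ Q SR) -> ~ (Q SB /\ Q SA) ->
  Q (opp_side k').
Proof.
move=> k12 QE; rewrite !QE; clear QE.
by case: k1 k2 k' k12 => [] [] [] //= k12; intuition (try discriminate; auto).
Qed.

Hypothesis wh_gt0 : forall i : 'I_N, (i < Nm)%N -> 0 < w i /\ 0 < h i.

Lemma shares_piece_alt2 t (zs : pt) eps k1 k2 : Ct t zs -> k1 <> k2 ->
  Kset t zs = [set k1] `|` [set k2] ->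
  eps <= gfun (zs.1 (val t).1) (zs.1 (val t).2) (w (val t).1) (w (val t).2) ->
  eps <= gfun (zs.2 (val t).1) (zs.2 (val t).2) (h (val t).1) (h (val t).2) ->
  shares_piece_at zs eps t.
Proof.
move=> Czs k12 K2 eps_x eps_y z zzs p /PsetP[Cp p_min].
have [k Cpk] := Ct_Ctk Cp; have [Czsk|nCzsk] := pselect (Ctk t k zs); first by exists k.
exfalso; have KE k' : Ctk t k' zs <-> k' = k1 \/ k' = k2 by rewrite -(KsetE _ Czs) K2.
have /andP[ij jNm] := valP t.
have [wi hi] := wh_gt0 (ltn_trans ij jNm); have [wj hj] := wh_gt0 jNm.
(* opposite pieces are disjoint, so the two active pieces are not opposite *)
have C_opp : Ctk t (opp_side k) zs.
  apply: (opp_side_active k12 KE nCzsk) => -[/CijkP[m1 _ _] /CijkP[m2 _ _]];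
  by move: m1 m2 => /=; lra.
have ij' : (val t).1 != (val t).2 by rewrite neq_ltn ij.
have near : dist z zs < gap_bound w h (val t).1 (val t).2 k zs.
  by case: k {Cpk nCzsk C_opp} => /=; lra.
have [wij hij] : 0 < w (val t).1 + w (val t).2 /\ 0 < h (val t).1 + h (val t).2.
  by split; apply: addr_gt0.
have [q Cq closer] := opp_piece_closer ij' wij hij C_opp Cpk near.
by move: (p_min q (Ctk_Ct Cq)); rewrite dist_le_sqnorm leNgt closer.
Qed.

End Radii.

Lemma inf_range_le (R : realType) (T : finType) (f : T -> R) t : inf (range f) <= f t.
Proof.
apply: ge_inf; last by exists t.
exists (- \sum_s `|f s|) => _ [s _ <-]; rewrite lerNl.
apply: le_trans (ler_norm _) _; rewrite normrN.
by rewrite (bigD1 s) //= lerDl sumr_ge0.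
Qed.

Section Attractor.
Variables (R : realType) (N Nm : nat) (W H : R) (w h : 'I_N -> R) (lam : R) (zs : pt R N).
Hypothesis lam02 : 0 < lam < 2.
Local Notation shares_piece_at := (@shares_piece_at R N Nm W H w h).

Lemma attractor_claim_shares (rt : pairT N Nm -> R) :
  (forall t (eps : R), eps < rt t -> shares_piece_at zs eps t) ->
  attractor_claim W H w h lam zs rt.
Proof.
move=> rt_shares r _ eps _ eps_r z tt z_MAP n0 z_n0.
have zs_sh t : shares_piece_at zs eps t.
  exact/rt_shares/(lt_le_trans eps_r)/inf_range_le.
split; last exact (traj_attracted lam02 z_MAP zs_sh z_n0).
by case: z_MAP => z_traj _; exact (traj_in_ball lam02 z_traj zs_sh z_n0).
Qed.

Hypothesis zs_C : forall t : pairT N Nm, Ct W H w h t zs.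

Lemma shares_piece_rt_primary t (eps : R) :
  eps < rt_primary W H w h zs t -> shares_piece_at zs eps t.
Proof.
rewrite lt_min => /andP[_ /ltW eps_desc]; exact: shares_piece_desc (zs_C t) eps_desc.
Qed.

Lemma shares_piece_rt_alt t (eps : R) : (forall i : 'I_N, (i < Nm)%N -> 0 < w i /\ 0 < h i) ->
  eps < rt_alt W H w h zs t -> shares_piece_at zs eps t.
Proof.
move=> wh_gt0; rewrite /rt_alt.
destruct (pselect _) as [[k0 K1]|not_K1].
  rewrite lt_min => /andP[/ltW eps_sep /ltW eps_mid].
  exact: shares_piece_alt1 (zs_C t) K1 eps_sep eps_mid.
destruct (pselect _) as [[k1 [k2 [k12 K2]]]|not_K2]; last exact: shares_piece_rt_primary.
rewrite lt_min => /andP[/ltW eps_x /ltW eps_y].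
exact (shares_piece_alt2 wh_gt0 (zs_C t) k12 K2 eps_x eps_y).
Qed.

End Attractor.

Unset Implicit Arguments.

Theorem mainTheorem3 (R : realType) (N Nm : nat) (W H : R) (w h : 'I_N -> R)
    (lam : R) :
  (2 <= Nm)%N -> (Nm <= N)%N -> 0 < W -> 0 < H ->
  (forall i : 'I_N, (i < Nm)%N -> 0 < w i /\ 0 < h i) ->
  (forall (t : pairT N Nm) (k : side), @Ctk R N Nm W H w h t k !=set0) ->
  0 < lam < 2 ->
  forall zs : pt R N, (forall t : pairT N Nm, @Fix R N Nm W H w h lam t zs) ->
  @attractor_claim R N Nm W H w h lam zs (@rt_primary R N Nm W H w h zs) /\
  @attractor_claim R N Nm W H w h lam zs (@rt_alt R N Nm W H w h zs).
Proof.
move=> _ _ _ _ wh_gt0 _ lam02 zs zs_fix.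
have lam_neq0 : lam != 0 by case/andP: lam02 => /gt_eqF ->.
have zs_C t : Ct W H w h t zs := Fix_Ct lam_neq0 (zs_fix t).
split; apply: (attractor_claim_shares lam02) => t eps eps_lt.
  exact: (shares_piece_rt_primary zs_C eps_lt).
exact: (shares_piece_rt_alt zs_C wh_gt0 eps_lt).
Qed.
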